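(* Let $R$ be a commutative ring with identity and $M$ a non-zero comultiplication $R$-module. If $G'(M)$ contains a cycle, then the girth of $G'(M)$ is $3$.
   Context: An $R$-module $M$ is a comultiplication module if for every submodule $N$ of $M$ there is an ideal $I$ of $R$ with $N=\mathrm{Ann}_M(I)$. A submodule $N$ of $M$ is large if $N\cap L\neq 0$ for every non-zero submodule $L$ of $M$. The large sum graph $G'(M)$ has as vertex set the set of all non-zero non-large submodules of $M$, and two distinct vertices $N,K$ are adjacent iff $N+K$ is non-large in $M$. *)

(* Submodules/ideals are represented as (possibly infinite)
   subsets, i.e. predicates [M -> Prop]. *)
From HB Require Import structures.
From mathcomp Require Import all_boot all_order all_algebra.
Set Implicit Arguments. Unset Strict Implicit. Unset Printing Implicit Defensive.
Import GRing.Theory.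
Local Open Scope ring_scope.

Section Defs.
Variable R : comPzRingType.
Variable M : lmodType R.

Definition is_submodule (N : M -> Prop) : Prop :=
  [/\ N 0, (forall x y, N x -> N y -> N (x + y)) & (forall (r : R) x, N x -> N (r *: x))].

Definition is_ideal (I : R -> Prop) : Prop :=
  [/\ I 0, (forall a b, I a -> I b -> I (a + b)) & (forall r a, I a -> I (r * a))].

Definition annM (I : R -> Prop) : M -> Prop := fun m => forall r, I r -> r *: m = 0.

Definition set_eq (N K : M -> Prop) : Prop := forall m, N m <-> K m.

Definition comultiplication_module : Prop :=
  forall N, is_submodule N -> exists I, is_ideal I /\ set_eq N (annM I).

Definition nonzero_sub (N : M -> Prop) : Prop := exists m, N m /\ m <> 0.

Definition large (N : M -> Prop) : Prop :=
  forall L, is_submodule L -> nonzero_sub L -> exists m, [/\ N m, L m & m <> 0].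

Definition sum_sub (N K : M -> Prop) : M -> Prop :=
  fun m => exists a b, [/\ N a, K b & m = a + b].

(* vertices of the large sum graph G'(M) *)
Definition lsg_vertex (N : M -> Prop) : Prop :=
  [/\ is_submodule N, nonzero_sub N & ~ large N].

Definition lsg_adj (N K : M -> Prop) : Prop :=
  [/\ lsg_vertex N, lsg_vertex K, ~ set_eq N K & ~ large (sum_sub N K)].

Definition lsg_cycle (n : nat) (c : nat -> M -> Prop) : Prop :=
  [/\ (3 <= n)%N,
      (forall i, (i < n)%N -> lsg_vertex (c i)),
      (forall i j, (i < n)%N -> (j < n)%N -> i <> j -> ~ set_eq (c i) (c j)) &
      (forall i, (i < n)%N -> lsg_adj (c i) (c (i.+1 %% n)%N))].

Definition lsg_has_cycle : Prop := exists n c, lsg_cycle n c.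

Definition lsg_girth_is (g : nat) : Prop :=
  (exists c, lsg_cycle g c) /\ (forall n c, lsg_cycle n c -> (g <= n)%N).

End Defs.

(* If two adjacent vertices N, K of G'(M) are incomparable, then N, K, N + K
   is a triangle.  So in a triangle-free G'(M) adjacent vertices are
   comparable, and along a path X - Y - Z with X <> Z the middle vertex is
   contained in both ends: otherwise X + Z lies inside one of the three
   non-large submodules X, Y, Z and closes a triangle.  On a cycle
   c0 - c1 - c2 - c3 (c3 = c0 when the length is 3) this forces c1 = c2. *)
From HB Require Import structures.
From mathcomp Require Import all_boot all_order all_algebra.
From Stdlib Require Import Classical.
From mathcomp Require Import zify.
Import GRing.Theory.
Local Open Scope ring_scope.

Set Implicit Arguments.

Section LargeSumGraph.
Variable R : comPzRingType.
Variable M : lmodType R.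
Implicit Types N K L X Y Z : M -> Prop.

Definition sub_le N K := forall m, N m -> K m.

Lemma nonlarge_sub_le N K : sub_le N K -> ~ large K -> ~ large N.
Proof.
move=> NK nlK lN; apply: nlK => L sL nzL.
by have [m [Nm Lm m0]] := lN L sL nzL; exists m; split => //; apply: NK.
Qed.

Lemma set_eq_sym N K : set_eq N K -> set_eq K N.
Proof. by move=> NK m; split => /NK. Qed.

Lemma is_submodule_sum N K :
  is_submodule N -> is_submodule K -> is_submodule (sum_sub N K).
Proof.
move=> [N0 ND NZ] [K0 KD KZ]; split.
- by exists 0, 0; rewrite addr0.
- move=> _ _ [a [b [Na Kb ->]]] [c [d [Nc Kd ->]]].
  by exists (a + c), (b + d); rewrite addrACA; split; [apply: ND|apply: KD|].
- move=> r _ [a [b [Na Kb ->]]].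
  by exists (r *: a), (r *: b); rewrite scalerDr; split; [apply: NZ|apply: KZ|].
Qed.

Lemma sub_le_suml N K : is_submodule K -> sub_le N (sum_sub N K).
Proof. by move=> [K0 _ _] m Nm; exists m, 0; rewrite addr0. Qed.

Lemma sub_le_sumr N K : is_submodule N -> sub_le K (sum_sub N K).
Proof. by move=> [N0 _ _] m Km; exists 0, m; rewrite add0r. Qed.

Lemma sum_sub_le N K L :
  is_submodule L -> sub_le N L -> sub_le K L -> sub_le (sum_sub N K) L.
Proof. by move=> [_ LD _] NL KL _ [a [b [Na Kb ->]]]; apply: LD; auto. Qed.

Lemma sum_subC N K : sub_le (sum_sub K N) (sum_sub N K).
Proof. by move=> _ [a [b [Ka Nb ->]]]; exists b, a; rewrite addrC. Qed.

Lemma lsg_adj_sym N K : lsg_adj N K -> lsg_adj K N.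
Proof.
move=> [vN vK nNK nlNK]; split => //; first by move=> e; apply/nNK/set_eq_sym.
exact: nonlarge_sub_le (@sum_subC N K) nlNK.
Qed.

Lemma lsg_adj_sub_le N K L : lsg_vertex N -> lsg_vertex K -> ~ set_eq N K ->
  sub_le (sum_sub N K) L -> ~ large L -> lsg_adj N K.
Proof. by move=> vN vK nNK NKL nlL; split => //; apply: nonlarge_sub_le nlL. Qed.

Lemma lsg_cycle_triangle X Y Z :
  lsg_adj X Y -> lsg_adj Y Z -> lsg_adj Z X ->
  lsg_cycle 3 (fun i => nth X [:: X; Y; Z] i).
Proof.
move=> aXY aYZ aZX.
have [vX vY nXY _] := aXY; have [_ vZ nYZ _] := aYZ; have [_ _ nZX _] := aZX.
have nYX : ~ set_eq Y X by move=> e; apply/nXY/set_eq_sym.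
have nZY : ~ set_eq Z Y by move=> e; apply/nYZ/set_eq_sym.
have nXZ : ~ set_eq X Z by move=> e; apply/nZX/set_eq_sym.
split => //.
- by case=> [|[|[|i]]].
- by case=> [|[|[|i]]] [|[|[|j]]].
- by case=> [|[|[|i]]].
Qed.

Definition lsg_has_triangle := exists c : nat -> M -> Prop, lsg_cycle 3 c.

Lemma lsg_adj_incomparable_triangle N K : lsg_adj N K ->
  ~ sub_le N K -> ~ sub_le K N -> lsg_has_triangle.
Proof.
move=> aNK nNK nKN; have [vN vK _ nlNK] := aNK.
have [sN [m [Nm m0]] _] := vN; have [sK _ _] := vK.
have sNK := is_submodule_sum sN sK.
have vNK : lsg_vertex (sum_sub N K).
  by split => //; exists m; split => //; apply: sub_le_suml.
have aK_NK : lsg_adj K (sum_sub N K).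
  apply: lsg_adj_sub_le nlNK => //.
  - by move=> e; apply: nNK => x Nx; apply/e; exact: sub_le_suml.
  - by apply: sum_sub_le => //; apply: sub_le_sumr.
have aNK_N : lsg_adj (sum_sub N K) N.
  apply: lsg_adj_sub_le nlNK => //.
  - by move=> e; apply: nKN => x Kx; apply/e; exact: sub_le_sumr.
  - by apply: sum_sub_le => // x; apply: sub_le_suml.
by exists (fun i => nth N [:: N; K; sum_sub N K] i); apply: lsg_cycle_triangle.
Qed.

Lemma lsg_adj_comparable N K : ~ lsg_has_triangle -> lsg_adj N K ->
  sub_le N K \/ sub_le K N.
Proof.
move=> noT aNK; apply: NNPP => /not_or_and [nNK nKN].
exact: noT (lsg_adj_incomparable_triangle aNK nNK nKN).
Qed.

Lemma lsg_path_sub_le X Y Z : ~ lsg_has_triangle ->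
  lsg_adj X Y -> lsg_adj Y Z -> ~ set_eq X Z -> sub_le Y X.
Proof.
move=> noT aXY aYZ nXZ.
have [vX vY _ _] := aXY; have [_ vZ _ _] := aYZ.
have [_ _ nlY] := vY; have [sZ _ nlZ] := vZ.
have triangle_of L : ~ large L -> sub_le (sum_sub X Z) L -> False.
  move=> nlL XZL; apply: noT; exists (fun i => nth X [:: X; Y; Z] i).
  exact/lsg_cycle_triangle/lsg_adj_sym/(lsg_adj_sub_le vX vZ nXZ XZL).
case: (lsg_adj_comparable noT aXY) => [XY|] //.
case: (lsg_adj_comparable noT aYZ) => [YZ|ZY]; exfalso.
- by apply: (triangle_of Z nlZ); apply: sum_sub_le => // m /XY /YZ.
- by apply: (triangle_of Y nlY); apply: sum_sub_le => //; case: vY.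
Qed.

End LargeSumGraph.

Theorem theorem2p8 (R : comPzRingType) (M : lmodType R)
  (hM : exists m : M, m <> 0)
  (hcomul : comultiplication_module M)
  (hcyc : lsg_has_cycle M) :
  lsg_girth_is M 3.
Proof.
split; last by move=> n c [].
apply: NNPP => noT; have [n [c [n3 _ dc ac]]] := hcyc.
have n1 : (1 < n)%N by lia.
have a01 := ac 0%N (ltnW n1); have a12 := ac 1%N n1; have a23 := ac 2%N n3.
rewrite (modn_small n1) in a01; rewrite (modn_small n3) in a12.
have c13 : ~ set_eq (c 1%N) (c (3 %% n)%N).
  apply: dc; [lia | by rewrite ltn_mod; lia |].
  have [-> // | gt3] : n = 3%N \/ (3 < n)%N by lia.
  by rewrite modn_small.
have c21 := lsg_path_sub_le noT a12 a23 c13.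
have c20 : ~ set_eq (c 2%N) (c 0%N) by apply: dc; lia.
have c12 := lsg_path_sub_le noT (lsg_adj_sym a12) (lsg_adj_sym a01) c20.
by have [_ _ n12 _] := a12; apply: n12 => m; split; [apply: c12 | apply: c21].
Qed.
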